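(* Let $t\ge 2$ be an integer and let $M$ be a $t$-spike of order at least $4t-4$. Then $M$ is $(2t-1)$-connected.
   Context: For a positive integer $t$, a matroid $M$ is a $t$-spike of order $r$ (where $r\ge t$) if there is a partition $(A_1,\ldots,A_r)$ of $E(M)$ into 2-element sets such that, for every $t$-element subset $J\subseteq\{1,\dots,r\}$, the set $\bigcup_{j\in J}A_j$ is both a circuit and a cocircuit of $M$. The connectivity function of $M$ with ground set $E$ is $\lambda(X)=r(X)+r(E-X)-r(M)$. A partition $(X,E-X)$ is a $k$-separation if $\lambda(X)<k$, $|X|\ge k$ and $|E-X|\ge k$; $M$ is $n$-connected if it has no $k$-separation for any $k<n$. *)

From mathcomp Require Import all_boot.
Set Implicit Arguments. Unset Strict Implicit. Unset Printing Implicit Defensive.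

(* A matroid on ground set E = [set: T], given by its independent sets. *)
Record matroid (T : finType) := Matroid {
  indep : pred {set T};
  indep0 : indep set0;
  indep_sub : forall I J : {set T}, J \subset I -> indep I -> indep J;
  indep_aug : forall I J : {set T}, indep I -> indep J -> #|I| < #|J| ->
                exists2 x, x \in J :\: I & indep (x |: I)
}.

Section MatroidNotions.
Variables (T : finType) (M : matroid T).

Definition rk (X : {set T}) : nat :=
  \max_(Y : {set T} | (Y \subset X) && indep M Y) #|Y|.

Definition rkM : nat := rk [set: T].

Definition dependent (X : {set T}) : bool := ~~ indep M X.

Definition circuit (C : {set T}) : bool :=
  dependent C && [forall D : {set T}, (D \proper C) ==> indep M D].

(* coindependent: independent in the dual matroid, i.e. E - X is spanning *)
Definition coindep (X : {set T}) : bool := rk (~: X) == rkM.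

(* cocircuit: circuit of the dual matroid, i.e. minimal non-coindependent set *)
Definition cocircuit (C : {set T}) : bool :=
  ~~ coindep C && [forall D : {set T}, (D \proper C) ==> coindep D].

Definition conn (X : {set T}) : nat := rk X + rk (~: X) - rkM.

Definition separation (k : nat) (X : {set T}) : bool :=
  [&& conn X < k, k <= #|X| & k <= #|~: X|].

Definition n_connected (n : nat) : Prop :=
  forall (k : nat) (X : {set T}), k < n -> ~~ separation k X.

Definition spike (t : nat) {r : nat} (A : 'I_r -> {set T}) : Prop :=
  [/\ t <= r,
      (forall i, #|A i| = 2),
      (forall i j, i != j -> [disjoint A i & A j]),
      \bigcup_(i < r) A i = [set: T] &
      (forall J : {set 'I_r}, #|J| = t ->
         circuit (\bigcup_(j in J) A j) /\ cocircuit (\bigcup_(j in J) A j))].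

Definition is_spike (t r : nat) : Prop :=
  exists A : 'I_r -> {set T}, spike t A.

End MatroidNotions.

From mathcomp Require Import all_boot zify.
Set Implicit Arguments. Unset Strict Implicit. Unset Printing Implicit Defensive.

(* For Y a set of elements, let S(Y) and F(Y) be the sets of legs meeting Y and
   contained in Y, so that |Y| = |S(Y)| + |F(Y)|.  A set meeting fewer than t
   legs lies properly inside a circuit, hence is independent; and deleting a leg
   met by Y lowers r(Y) as long as t - 1 legs avoid Y, because those legs and
   the deleted one form a cocircuit meeting a suitable subset of Y in a single
   element.  Together these give
     r(Y) >= min(|S(Y)|, r - t + 1) + min(|F(Y)|, t - 1).
   Circuits bound the rank of a union of s legs by s + min(s, t - 1), which
   applied to the complement of a cocircuit gives r(M) <= r.  Since S(E - X)
   and F(E - X) are the complements of F(X) and S(X), adding the bounds for X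
   and E - X shows that lambda(X) < k <= 2t - 2 is impossible once
   r >= 4t - 4. *)

Lemma exists_subset_card (I : finType) (B : {set I}) k :
  k <= #|B| -> exists2 K : {set I}, K \subset B & #|K| = k.
Proof.
elim: k => [|k IHk] leB; first by exists set0; rewrite ?sub0set ?cards0.
have [K sKB cardK] := IHk (ltnW leB).
have /card_gt0P[x /setDP[xB xK]] : 0 < #|B :\: K| by rewrite cardsDS //; lia.
by exists (x |: K); rewrite ?subUset ?sub1set ?xB // cardsU1 xK cardK.
Qed.

Section MatroidRank.
Variables (T : finType) (M : matroid T).
Implicit Types (C D I S W X Y : {set T}) (e : T).

Lemma rk_max_indep X : exists2 B : {set T}, (B \subset X) && indep M B & rk M X = #|B|.
Proof.
pose P := [pred B : {set T} | (B \subset X) && indep M B].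
have P0 : 0 < #|P| by apply/card_gt0P; exists set0; rewrite inE sub0set indep0.
have [B PB rkB] := eq_bigmax_cond (fun B : {set T} => #|B|) P0.
by exists B => //; rewrite -rkB; apply: eq_bigl.
Qed.

Lemma rk_leq_card X : rk M X <= #|X|.
Proof. by apply/bigmax_leqP => B /andP[sBX _]; apply: subset_leq_card. Qed.

Lemma indep_leq_rk I X : I \subset X -> indep M I -> #|I| <= rk M X.
Proof. by move=> sIX indI; apply: leq_bigmax_cond; rewrite sIX. Qed.

Lemma rk_indep I : indep M I -> rk M I = #|I|.
Proof. by move=> indI; apply/eqP; rewrite eqn_leq rk_leq_card indep_leq_rk. Qed.

Lemma rk_dependent X : dependent M X -> rk M X < #|X|.
Proof.
move=> depX; have [B /andP[sBX indB] ->] := rk_max_indep X.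
rewrite ltn_neqAle subset_leq_card // andbT.
apply: contraNneq depX => cardB.
suff /eqP <- : B == X by [].
by rewrite eqEcard sBX cardB /=.
Qed.

Lemma rkS X Y : X \subset Y -> rk M X <= rk M Y.
Proof.
move=> sXY; have [B /andP[sBX indB] ->] := rk_max_indep X.
exact: indep_leq_rk (subset_trans sBX sXY) indB.
Qed.

Lemma indep_extend I S : I \subset S -> indep M I ->
  exists J : {set T}, [/\ I \subset J, J \subset S, indep M J & #|J| = rk M S].
Proof.
have [n] := ubnP (rk M S - #|I|); elim: n => // n IHn in I *; rewrite ltnS => gapI sIS indI.
have [B /andP[sBS indB] rkB] := rk_max_indep S.
have [leBI | ltIB] := leqP #|B| #|I|.
  by exists I; split=> //; apply/eqP; rewrite eqn_leq indep_leq_rk // rkB.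
have [x /setDP[xB xI] indxI] := indep_aug indI indB ltIB.
have [|||J [sxIJ sJS indJ cardJ]] := IHn (x |: I).
- by rewrite cardsU1 xI; lia.
- by rewrite subUset sub1set (subsetP sBS).
- exact: indxI.
by exists J; split=> //; apply: subset_trans sxIJ; apply: subsetUr.
Qed.

Lemma rk_submod X Y : rk M (X :|: Y) + rk M (X :&: Y) <= rk M X + rk M Y.
Proof.
have [I /andP[sIXY indI] ->] := rk_max_indep (X :&: Y).
have sIXuY : I \subset X :|: Y.
  exact: subset_trans sIXY (subset_trans (subsetIl X Y) (subsetUl X Y)).
have [J [sIJ sJXY indJ <-]] := indep_extend sIXuY indI.
have rkJX : #|J :&: X| <= rk M X.
  by apply: indep_leq_rk (subsetIr _ _) (indep_sub (subsetIl _ _) indJ).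
have rkJY : #|J :&: Y| <= rk M Y.
  by apply: indep_leq_rk (subsetIr _ _) (indep_sub (subsetIl _ _) indJ).
have JXY : (J :&: X) :|: (J :&: Y) = J by rewrite -setIUr; apply/setIidPl.
have : #|I| <= #|(J :&: X) :&: (J :&: Y)|.
  by apply: subset_leq_card; rewrite setIACA setIid subsetI sIJ.
by have := cardsUI (J :&: X) (J :&: Y); rewrite JXY; lia.
Qed.

Lemma rk_subadd X Y : rk M (X :|: Y) <= rk M X + rk M Y.
Proof. exact: leq_trans (leq_addr _ _) (rk_submod X Y). Qed.

Lemma rk_circuitD1 C S e : circuit M C -> e \in C -> C \subset S -> rk M (S :\ e) = rk M S.
Proof.
move=> /andP[depC /forallP minC] eC sCS.
apply/eqP; rewrite eqn_leq rkS ?subD1set //=.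
have indCe : indep M (C :\ e) by have := minC (C :\ e); rewrite properD1.
have SCe : (S :\ e) :|: C = S.
  apply/eqP; rewrite eqEsubset subUset subD1set sCS /=.
  apply/subsetP => z zS; rewrite !inE zS andbT.
  by case: (eqVneq z e) => [->|]; rewrite ?eC ?orbT.
have CeS : C :\ e \subset (S :\ e) :&: C by rewrite subsetI setSD // subD1set.
have := rk_submod (S :\ e) C; rewrite SCe.
have := rkS CeS; have := rk_dependent depC; rewrite (rk_indep indCe) [#|C|](cardsD1 e C) eC.
lia.
Qed.

Lemma rk_cocircuitD1 D W e : cocircuit M D -> W :&: D = [set e] -> rk M (W :\ e) < rk M W.
Proof.
move=> /andP[ncoD /forallP minD] WD.
have /setIP[eW eD] : e \in W :&: D by rewrite WD set11.
have /eqP coDe : coindep M (D :\ e) by have := minD (D :\ e); rewrite properD1.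
have rkDM : rk M (~: D) < rkM M.
  by rewrite ltn_neqAle ncoD rkS ?subsetT.
have sDe : ~: (D :\ e) \subset ~: D :|: W.
  apply/subsetP => z; rewrite !inE negb_and negbK.
  by case/orP=> [/eqP->|->]; rewrite ?eW ?orbT.
have sWe : W :\ e \subset ~: D :&: W.
  apply/subsetP => z /setD1P[ze zW]; rewrite !inE zW andbT.
  by apply: contra ze => zD; rewrite -in_set1 -WD inE zW.
have := rk_submod (~: D) W; have := rkS sDe; have := rkS sWe; rewrite coDe.
lia.
Qed.

End MatroidRank.

Lemma sum_mem_card (I : finType) (S : {pred I}) : \sum_i (i \in S) = #|S|.
Proof. by rewrite -sum1_card [RHS]big_mkcond; apply: eq_bigr => i _; case: (i \in S). Qed.

Section Legs.
Variables (T : finType) (r : nat) (A : 'I_r -> {set T}).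
Implicit Types (W Y : {set T}) (K : {set 'I_r}) (i j : 'I_r).

Definition meet_legs Y := [set i | A i :&: Y != set0].
Definition full_legs Y := [set i | A i \subset Y].
Definition legs K := \bigcup_(j in K) A j.

Lemma meet_legsS W Y : W \subset Y -> meet_legs W \subset meet_legs Y.
Proof.
move=> sWY; apply/subsetP => i; rewrite !inE; apply: contraNneq => AY0.
by rewrite -subset0 -AY0 setIS.
Qed.

Lemma meet_legsC Y : meet_legs (~: Y) = ~: full_legs Y.
Proof. by apply/setP => i; rewrite !inE -setDE setD_eq0. Qed.

Lemma full_legsC Y : full_legs (~: Y) = ~: meet_legs Y.
Proof. by apply/setP => i; rewrite !inE negbK setI_eq0 disjoints_subset. Qed.

Lemma legsS K1 K2 : K1 \subset K2 -> legs K1 \subset legs K2.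
Proof. by move=> sK; apply/bigcupsP => j jK1; apply: bigcup_sup; apply: (subsetP sK). Qed.

Hypothesis legs_disjoint : forall i j, i != j -> [disjoint A i & A j].

Lemma meet_legsD Y i : meet_legs (Y :\: A i) = meet_legs Y :\ i.
Proof.
apply/setP => j; rewrite !inE setIDA.
have [->|ji] := eqVneq j i; first by rewrite setDIl setDv set0I eqxx.
congr (~~ (_ == _)); apply/setDidPl.
exact: disjointWl (subsetIl _ _) (legs_disjoint ji).
Qed.

Hypothesis card_leg : forall i, #|A i| = 2.

Lemma full_legs_sub_meet Y : full_legs Y \subset meet_legs Y.
Proof.
by apply/subsetP => i; rewrite !inE => AiY; rewrite (setIidPl AiY) -card_gt0 card_leg.
Qed.

Lemma full_legsD Y i : full_legs (Y :\: A i) = full_legs Y :\ i.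
Proof.
apply/setP => j; rewrite !inE subsetD.
have [->|ji] := eqVneq j i; last by rewrite legs_disjoint ?andbT.
by apply/negbTE; rewrite negb_and orbC -setI_eq0 setIid -card_gt0 card_leg.
Qed.

Lemma card_setI_leg Y i : #|Y :&: A i| = (i \in meet_legs Y) + (i \in full_legs Y).
Proof.
have le2 : #|A i :&: Y| <= 2 by rewrite -(card_leg i) subset_leq_card ?subsetIl.
have -> : (i \in full_legs Y) = (#|A i :&: Y| == 2).
  rewrite inE; apply/setIidPl/eqP => [-> // | card2].
  by apply/eqP; rewrite eqEcard subsetIl card2 card_leg.
rewrite inE -cards_eq0 setIC; move: le2.
by case: #|_| => [|[|[|]]].
Qed.

Hypothesis legs_cover : \bigcup_(i < r) A i = [set: T].

Lemma exists_leg x : exists i, x \in A i.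
Proof.
have : x \in \bigcup_(i < r) A i by rewrite legs_cover inE.
by case/bigcupP => i _ xAi; exists i.
Qed.

Lemma sum_mem_legs x : \sum_i (x \in A i) = 1.
Proof.
have [i xAi] := exists_leg x.
rewrite (bigD1 i) //= xAi big1 // => j ji.
by rewrite (disjointFl (legs_disjoint ji) xAi).
Qed.

Lemma mem_legs K x i : x \in A i -> (x \in legs K) = (i \in K).
Proof.
move=> xAi; apply/bigcupP/idP => [[j jK xAj] | iK]; last by exists i.
have [<- // | ji] := eqVneq j i.
by rewrite (disjointFl (legs_disjoint ji) xAi) in xAj.
Qed.

Lemma legsC K : ~: legs K = legs (~: K).
Proof.
by apply/setP => x; have [i xAi] := exists_leg x; rewrite inE !(mem_legs _ xAi) inE.
Qed.

Lemma sub_legs_meet Y : Y \subset legs (meet_legs Y).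
Proof.
apply/subsetP => x xY; have [i xAi] := exists_leg x.
by rewrite (mem_legs _ xAi) inE; apply/set0Pn; exists x; rewrite inE xAi.
Qed.

Lemma card_meet_full Y : #|Y| = #|meet_legs Y| + #|full_legs Y|.
Proof.
rewrite -[#|meet_legs Y|]sum_mem_card -[#|full_legs Y|]sum_mem_card -big_split /=.
under eq_bigr do rewrite -card_setI_leg -sum_mem_card.
rewrite exchange_big -sum_mem_card; apply: eq_bigr => x _.
under eq_bigr do rewrite inE.
by case: (x \in Y); rewrite /= ?sum_mem_legs ?big1.
Qed.

End Legs.

Section Spike.
Variables (T : finType) (M : matroid T) (t r : nat) (A : 'I_r -> {set T}).
Hypothesis spikeA : spike M t A.
Implicit Types (W Y : {set T}) (J K : {set 'I_r}).

Let t_le_r : t <= r. Proof. by case: spikeA. Qed.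
Let card_leg i : #|A i| = 2. Proof. by case: spikeA. Qed.
Let legs_disjoint i j : i != j -> [disjoint A i & A j].
Proof. by case: spikeA => _ _ /(_ i j). Qed.
Let legs_cover : \bigcup_(i < r) A i = [set: T]. Proof. by case: spikeA. Qed.
Let legs_circuit J : #|J| = t -> circuit M (legs A J).
Proof. by case: spikeA => _ _ _ _ /(_ J) legsJ /legsJ[]. Qed.
Let legs_cocircuit J : #|J| = t -> cocircuit M (legs A J).
Proof. by case: spikeA => _ _ _ _ /(_ J) legsJ /legsJ[]. Qed.

Lemma spike_t_gt0 : 0 < t.
Proof.
rewrite lt0n; apply/eqP => t0.
have /andP[/negP[]] : circuit M (legs A set0) by apply: legs_circuit; rewrite cards0.
by rewrite /legs big_set0 indep0.
Qed.

Lemma rk_single_meetD1 W j e : #|meet_legs A W| <= r - t + 1 -> W :&: A j = [set e] ->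
  rk M (W :\ e) < rk M W.
Proof.
move=> smallW WAj.
have /setIP[eW eAj] : e \in W :&: A j by rewrite WAj set11.
have jW : j \in meet_legs A W by rewrite inE setIC WAj -card_gt0 cards1.
have /exists_subset_card[K sK cardK] : t - 1 <= #|~: meet_legs A W|.
  by have := cardsC (meet_legs A W); rewrite card_ord; have := t_le_r; lia.
have jK : j \notin K by apply: contraL jW => /(subsetP sK); rewrite inE.
have cardJ : #|j |: K| = t by rewrite cardsU1 jK cardK; have := spike_t_gt0; lia.
(* The legs j |: K form a cocircuit meeting W exactly in e. *)
apply: (rk_cocircuitD1 (legs_cocircuit cardJ)); apply/eqP.
rewrite eqEsubset andbC sub1set inE eW (mem_legs legs_disjoint _ eAj) setU11 /=.
apply/subsetP => z /setIP[zW /bigcupP[l /setU1P[-> | lK] zAl]].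
  by rewrite -WAj inE zW.
have := subsetP sK l lK; rewrite !inE negbK => /eqP AlW0.
by move/setP/(_ z): AlW0; rewrite !inE zAl zW.
Qed.

Lemma rk_meet_legD W i : i \in meet_legs A W -> #|meet_legs A W| <= r - t + 1 ->
  rk M (W :\: A i) < rk M W.
Proof.
move=> iW smallW; move: (iW); rewrite inE => /set0Pn[e /setIP[eAi eW]].
pose V := W :\: (A i :\ e).
have VAi : V :&: A i = [set e].
  apply/setP => z; rewrite !inE; case: (eqVneq z e) => [->|_] /=; first by rewrite eW eAi.
  by case: (z \in A i); rewrite ?andbF.
have VeW : V :\ e = W :\: A i.
  apply/setP => z; rewrite !inE; case: (eqVneq z e) => [->|_] /=; first by rewrite eAi.
  by case: (z \in A i).
have smallV : #|meet_legs A V| <= r - t + 1.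
  exact: leq_trans (subset_leq_card (meet_legsS A (subsetDl W _))) smallW.
have := rk_single_meetD1 smallV VAi; rewrite VeW => /leq_trans; apply.
exact/rkS/subsetDl.
Qed.

Lemma indep_small_meet Y : #|meet_legs A Y| < t -> indep M Y.
Proof.
move=> smallY.
have /exists_subset_card[K sK cardK] : t - #|meet_legs A Y| <= #|~: meet_legs A Y|.
  by have := cardsC (meet_legs A Y); rewrite card_ord; have := t_le_r; lia.
have [j jK] : exists j, j \in K by apply/card_gt0P; rewrite cardK subn_gt0.
have [x xAj] : exists x, x \in A j by apply/card_gt0P; rewrite card_leg.
have disjK : [disjoint meet_legs A Y & K] by rewrite disjoint_sym disjoints_subset.
have cardJ : #|meet_legs A Y :|: K| = t.
  by rewrite cardsU (disjoint_setI0 disjK) cards0 cardK; lia.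
have /andP[_ /forallP/(_ Y)/implyP] := legs_circuit cardJ; apply.
rewrite properE (subset_trans (sub_legs_meet legs_disjoint legs_cover Y)) ?legsS ?subsetUl //=.
apply/subsetPn; exists x; first by rewrite (mem_legs legs_disjoint _ xAj) inE jK orbT.
apply: contraL (subsetP sK j jK) => xY; rewrite !inE negbK; apply/set0Pn.
by exists x; rewrite inE xAj.
Qed.

Lemma meet_full_leq_rk Y : 2 * t <= r + 2 ->
  minn #|meet_legs A Y| (r - t + 1) + minn #|full_legs A Y| (t - 1) <= rk M Y.
Proof.
move=> tr; have [n] := ubnP #|meet_legs A Y|; elim: n Y => // n IHn Y; rewrite ltnS => sizeY.
have [smallY | bigY] := ltnP #|meet_legs A Y| t.
  rewrite (rk_indep (indep_small_meet smallY)).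
  by rewrite (card_meet_full legs_disjoint card_leg legs_cover); lia.
have [i iY keepF] : exists2 i, i \in meet_legs A Y &
    minn #|full_legs A Y :\ i| (t - 1) = minn #|full_legs A Y| (t - 1).
  have [fewF | manyF] := ltnP #|full_legs A Y| t.
    have /subsetPn[i iY iF] : ~~ (meet_legs A Y \subset full_legs A Y).
      by apply: contraTN bigY => /subset_leq_card; rewrite -ltnNge; lia.
    by exists i; rewrite // [#|full_legs A Y|](cardsD1 i) (negbTE iF).
  have [i iY] : exists i, i \in meet_legs A Y by apply/card_gt0P; have := spike_t_gt0; lia.
  exists i => //; have := cardsD1 i (full_legs A Y).
  by have := leq_b1 (i \in full_legs A Y); lia.
have cardYi := cardsD1 i (meet_legs A Y); rewrite iY in cardYi.
have IH : minn #|meet_legs A Y :\ i| (r - t + 1) + minn #|full_legs A Y :\ i| (t - 1)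
    <= rk M (Y :\: A i).
  by rewrite -meet_legsD // -full_legsD //; apply: IHn; rewrite meet_legsD //; lia.
rewrite keepF in IH; have [smallY | bigY'] := leqP #|meet_legs A Y| (r - t + 1).
  by have := rk_meet_legD iY smallY; lia.
by have := rkS M (subsetDl Y (A i)); lia.
Qed.

Lemma rk_legs_leq K : rk M (legs A K) <= #|K| + minn #|K| (t - 1).
Proof.
have [n] := ubnP #|K|; elim: n K => // n IHn K; rewrite ltnS => sizeK.
have [->|[i iK]] := set_0Vmem K.
  by rewrite /legs big_set0 cards0 (leq_trans (rk_leq_card M set0)) ?cards0.
have cardKi := cardsD1 i K; rewrite iK in cardKi.
have IH : rk M (legs A (K :\ i)) <= #|K :\ i| + minn #|K :\ i| (t - 1) by apply: IHn; lia.
have legsK : legs A K = A i :|: legs A (K :\ i) by rewrite /legs (big_setD1 _ iK).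
have [fewK | manyK] := ltnP #|K :\ i| (t - 1).
  have := rk_subadd M (A i) (legs A (K :\ i)); have := rk_leq_card M (A i).
  by rewrite -legsK card_leg; lia.
(* With t - 1 other legs present, one element of leg i lies in a circuit with them. *)
have [K0 sK0 cardK0] := exists_subset_card manyK.
have iK0 : i \notin K0 by apply/negP => /(subsetP sK0); rewrite setD11.
have cardJ : #|i |: K0| = t by rewrite cardsU1 iK0 cardK0; have := spike_t_gt0; lia.
have [y yAi] : exists y, y \in A i by apply/card_gt0P; rewrite card_leg.
have yJ : y \in legs A (i |: K0) by rewrite (mem_legs legs_disjoint _ yAi) setU11.
have sJK : legs A (i |: K0) \subset legs A K.
  by apply: legsS; rewrite subUset sub1set iK (subset_trans sK0) ?subsetDl.
rewrite -(rk_circuitD1 (legs_circuit cardJ) yJ sJK).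
have sKy : legs A K :\ y \subset (A i :\ y) :|: legs A (K :\ i).
  by rewrite legsK setDUl setUS ?subD1set.
have := rkS M sKy; have := rk_subadd M (A i :\ y) (legs A (K :\ i)).
have := rk_leq_card M (A i :\ y); have := cardsD1 y (A i); rewrite yAi card_leg.
lia.
Qed.

Lemma rkM_leq_order : rkM M <= r.
Proof.
have /exists_subset_card[J _ cardJ] : t <= #|[set: 'I_r]| by rewrite cardsT card_ord.
have [j jJ] : exists j, j \in J by apply/card_gt0P; rewrite cardJ spike_t_gt0.
have [e eAj] : exists e, e \in A j by apply/card_gt0P; rewrite card_leg.
have eJ : e \in legs A J by rewrite (mem_legs legs_disjoint _ eAj).
have /andP[_ /forallP/(_ (legs A J :\ e))] := legs_cocircuit cardJ.
rewrite properD1 //= => /eqP <-.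
rewrite setCD setUC (legsC legs_disjoint legs_cover).
have := rk_subadd M [set e] (legs A (~: J)); have := rk_leq_card M [set e].
have := rk_legs_leq (~: J); have := cardsC J; rewrite cards1 card_ord.
by have := spike_t_gt0; lia.
Qed.

End Spike.

Theorem lemma6p5 (T : finType) (M : matroid T) (t r : nat) :
  2 <= t -> 4 * t - 4 <= r -> is_spike M t r -> n_connected M (2 * t - 1).
Proof.
move=> t_ge2 r_ge [A spikeA] k X k_lt; apply/negP => /and3P[conn_lt kX kXc].
have [_ card_leg legs_disjoint legs_cover _] := spikeA.
have tr : 2 * t <= r + 2 by lia.
have lowX := meet_full_leq_rk spikeA X tr.
have lowXc := meet_full_leq_rk spikeA (~: X) tr.
have cardX := card_meet_full legs_disjoint card_leg legs_cover X.
have cardXc := card_meet_full legs_disjoint card_leg legs_cover (~: X).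
rewrite meet_legsC full_legsC in lowXc cardXc.
have := cardsC (meet_legs A X); have := cardsC (full_legs A X); rewrite card_ord.
have := subset_leq_card (full_legs_sub_meet card_leg X).
have := rkM_leq_order spikeA.
by move: conn_lt; rewrite /conn; lia.
Qed.
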